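(* Let $d\ge1$, $\beta>0$, $\theta:[0,\infty)\to[0,\infty)$ continuous with $\theta(x)>0$ for $x>0$ and $h_\pm<\infty$; $\mu>0$ for bosons, $\mu\in\mathbb{R}$ for fermions. Let $\vec K^L\sim\mathcal{P}^L_\pm$ independently over $L$. There exists a constant $c=c(\theta)$ such that almost surely $$\limsup_{L\to\infty}\max_{\vec u\in B_{\vec1}(L)}\frac{R^L_{\vec u}(\vec K^L)}{(\log L)^{1/d}}\le c.$$
   Context: Put $q_{\vec n}^L=e^{-\beta(\theta(\|\vec n\|/L)+\mu)}$. Bosons: under $\mathcal{P}^L_+$ the $K_{\vec n}$, $\vec n\in\mathbb{Z}^d$, are independent with $\mathbb{P}(K_{\vec n}=k)=(1-q^L_{\vec n})(q^L_{\vec n})^k$, $k\ge0$. Fermions: independent $\{0,1\}$-valued with $\mathbb{P}(K_{\vec n}=1)=q^L_{\vec n}/(1+q^L_{\vec n})$. $h_\pm=\int_{\mathbb{R}^d}\big(\mp\log(1\mp e^{-\beta(\theta(\|\vec y\|)+\mu)})+\beta(\theta(\|\vec y\|)+\mu)\frac{e^{-\beta(\theta(\|\vec y\|)+\mu)}}{1\mp e^{-\beta(\theta(\|\vec y\|)+\mu)}}\big)d\vec y$. $B_{\vec u}(s)=\{\vec n\in\mathbb{Z}^d:u_i\le n_i\le u_i+s-1\ \forall i\}$, $\vec k_{\vec u}(s)=(k_{\vec n})_{\vec n\in B_{\vec u}(s)}$, $R^L_{\vec u}(\vec k)=\inf\{s\ge1:\vec k_{\vec u}(s)\ne\vec k_{\vec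 v}(s)\ \forall\vec v\ne\vec u,\ \vec v\in B_{\vec1}(L)\}$. *)

From HB Require Import structures.
From mathcomp Require Import all_boot all_order all_algebra.
From mathcomp Require Import all_classical all_reals all_analysis.
Set Implicit Arguments. Unset Strict Implicit. Unset Printing Implicit Defensive.
Import Order.TTheory GRing.Theory Num.Theory.
Import numFieldNormedType.Exports.
Local Open Scope classical_set_scope.
Local Open Scope ring_scope.

Definition Zd (d : nat) := {ffun 'I_d -> int}.

Definition Zd_norm (R : realType) (d : nat) (n : Zd d) : R :=
  Num.sqrt (\sum_(i < d) ((n i)%:~R) ^+ 2).

Inductive stat := Boson | Fermion.

Definition qL (R : realType) (d : nat) (beta mu : R) (theta : R -> R)
  (L : nat) (n : Zd d) : R :=
  expR (- (beta * (theta (Zd_norm R n / L%:R) + mu))).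

(* the one-site law of K_n under P^L_+ (bosons) / P^L_- (fermions) *)
Definition site_pmf (R : realType) (st : stat) (q : R) (k : nat) : R :=
  match st with
  | Boson => (1 - q) * q ^+ k
  | Fermion => if k == 0%N then 1 / (1 + q)
               else if k == 1%N then q / (1 + q) else 0
  end.

Definition h_integrand (R : realType) (st : stat) (beta mu : R)
  (theta : R -> R) (r : R) : R :=
  let x := beta * (theta r + mu) in
  match st with
  | Boson => - ln (1 - expR (- x)) + x * expR (- x) / (1 - expR (- x))
  | Fermion => ln (1 + expR (- x)) + x * expR (- x) / (1 + expR (- x))
  end.

(* iterated Lebesgue integral over R^n of a function of n real variables
   (given as a list); for nonnegative integrands this is the Lebesgue
   integral over R^n by Tonelli *)
Fixpoint iter_integral (R : realType) (n : nat)
  (f : seq R -> \bar R) : \bar R :=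
  match n with
  | 0%N => f [::]
  | n'.+1 => (\int[@lebesgue_measure R]_x iter_integral n' (fun s => f (x :: s)))%E
  end.

Definition seq_norm (R : realType) (y : seq R) : R :=
  Num.sqrt (\sum_(a <- y) a ^+ 2).

Definition h_pm (R : realType) (st : stat) (d : nat) (beta mu : R)
  (theta : R -> R) : \bar R :=
  iter_integral d (fun y => (h_integrand st beta mu theta (seq_norm y))%:E).

Definition mutually_independent (dT : measure_display) (T : measurableType dT)
  (R : realType) (P : probability T R) (I : eqType) (X : I -> T -> nat) :=
  forall (s : seq I), uniq s -> forall (A : I -> set nat),
    P (\bigcap_(i in [set` s]) (X i @^-1` A i)) =
    (\prod_(i <- s) P (X i @^-1` A i))%E.

Definition box (d : nat) (u : Zd d) (s : nat) : set (Zd d) :=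
  [set n | forall i, (u i <= n i)%R /\ (n i <= u i + s%:Z - 1)%R].

Definition one_vec (d : nat) : Zd d := [ffun _ => 1%Z].

Definition zshift (d : nat) (u j : Zd d) : Zd d := [ffun i => u i + j i].

Definition same_window (d : nat) (k : Zd d -> nat) (u v : Zd d) (s : nat) :=
  forall j : Zd d, (forall i, (0 <= j i)%R /\ (j i <= s%:Z - 1)%R) ->
    k (zshift u j) = k (zshift v j).

(* R^L_u(k) (inf of the empty set = +oo) *)
Definition RL (R : realType) (d : nat) (L : nat) (u : Zd d)
  (k : Zd d -> nat) : \bar R :=
  ereal_inf [set (s%:R)%:E | s in
    [set s : nat | (1 <= s)%N /\
       forall v, box (one_vec d) L v -> v <> u -> ~ same_window k u v s]].

Definition RL_ratio (R : realType) (d : nat) (L : nat) (k : Zd d -> nat)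
  : \bar R :=
  (ereal_sup [set RL R L u k | u in box (one_vec d) L] *
   ((ln (L%:R : R)) `^ (d%:R^-1))^-1%:E)%E.

From HB Require Import structures.
From mathcomp Require Import all_boot all_order all_algebra.
From mathcomp Require Import all_classical all_reals all_analysis.
From mathcomp Require Import ring lra zify.
Set Implicit Arguments. Unset Strict Implicit. Unset Printing Implicit Defensive.
Import Order.TTheory GRing.Theory Num.Theory.
Import numFieldNormedType.Exports.
Local Open Scope classical_set_scope.
Local Open Scope ring_scope.

(* Fix L and the window side s = floor(c (log L)^(1/d)) + 1.  If two
   distinct points u, v of B_1(L) carried the same configuration on their
   windows of side s, then the indicators [K = 0] would agree on the pairs
   (u + j, v + j) for j in a set J of at least s^d / 2 offsets, chosen (by
   the parity of j_i / |u_i - v_i| in a coordinate i where u and v differ) so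
   that these 2 |J| sites are pairwise distinct.  As theta is bounded on
   [0, 2d], P(K = 0) stays in [del, 1 - del] on the sites involved, so by
   independence each pair agrees with probability at most 1 - del and all of
   them with probability at most (1 - del)^(s^d / 2) <= L^-(2d + 2).  A union
   bound over the L^(2d) pairs (u, v) gives L^-2, which is summable; by
   Borel-Cantelli, almost surely for all large L every R^L_u is at most
   s <= (c + 1) (log L)^(1/d). *)

Lemma mutually_independent_inj (dT : measure_display) (T : measurableType dT)
    (R : realType) (P : probability T R) (I J : eqType) (X : I -> T -> nat)
    (f : J -> I) :
  injective f -> mutually_independent P X ->
  mutually_independent P (fun j => X (f j)).
Proof.
move=> f_inj indX s us A.
pose B i : set nat := [set k | forall j, f j = i -> A j k].
have BfE j : B (f j) = A j.
  by apply/seteqP; split => k /= => [|Ajk j' /f_inj ->]; [apply|].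
have := indX [seq f j | j <- s] _ B; rewrite map_inj_uniq // big_map => /(_ us).
under eq_bigr do rewrite BfE.
move=> <-; congr (P _); apply/seteqP; split => t /= Ht.
- by move=> _ /mapP[j sj ->]; rewrite BfE; apply: Ht.
- by move=> j sj; rewrite -BfE; apply: Ht; apply: map_f.
Qed.

Section agreement.
Context {R : realType} {dT : measure_display} {T : measurableType dT}
  (P : probability T R) {I : choiceType} (X : I -> T -> nat) (Z : pred nat).
Hypothesis mX : forall i, measurable_fun setT (X i).
Hypothesis indX : mutually_independent P X.

Lemma measurable_preimage i (A : set nat) : measurable (X i @^-1` A).
Proof. by rewrite -[X i @^-1` A]setTI; apply: mX. Qed.

Definition cylinder (s : seq I) (A : I -> set nat) : set T :=
  \big[setI/setT]_(i <- s) X i @^-1` A i.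

Lemma measurable_cylinder s A : measurable (cylinder s A).
Proof. by apply: bigsetI_measurable => i _; exact: measurable_preimage. Qed.

Lemma fine_prob_cylinder (s : seq I) (A : I -> set nat) : uniq s ->
  fine (P (cylinder s A)) = \prod_(i <- s) fine (P (X i @^-1` A i)).
Proof.
move=> us; rewrite /cylinder -(bigcap_seq s (fun i => X i @^-1` A i)) indX //.
have finP i : P (X i @^-1` A i) \is a fin_num.
  by apply: fin_num_measure; apply: measurable_preimage.
elim: s {us} => [|i s IHs]; rewrite ?big_nil ?big_cons //.
by rewrite fineM ?IHs // prode_fin_num.
Qed.

Definition Zevent (i : I) (c : bool) : set T := X i @^-1` [set k | Z k = c].

Definition pZ (i : I) : R := fine (P (Zevent i true)).

Definition agree (a b : I) : set T := [set t | Z (X a t) = Z (X b t)].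

Definition all_agree (ps : seq (I * I)) : set T :=
  \big[setI/setT]_(p <- ps) agree p.1 p.2.

Definition agree_weight (a b : I) : R :=
  pZ a * pZ b + (1 - pZ a) * (1 - pZ b).

Lemma pZ_ge0 i : 0 <= pZ i.
Proof. exact/fine_ge0/measure_ge0. Qed.

Lemma pZ_le1 i : pZ i <= 1.
Proof.
rewrite /pZ -lee_fin fineK ?probability_le1 ?fin_num_measure //;
  exact: measurable_preimage.
Qed.

Lemma fine_prob_Zevent_false i : fine (P (Zevent i false)) = 1 - pZ i.
Proof.
have -> : Zevent i false = ~` Zevent i true.
  by apply/seteqP; split => t; rewrite /Zevent /preimage /=; case: (Z (X i t)).
rewrite probability_setC; last exact: measurable_preimage.
by rewrite fineB ?fin_num_measure //; exact: measurable_preimage.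
Qed.

Lemma agree_weight_ge0 a b : 0 <= agree_weight a b.
Proof.
have := pZ_ge0 a; have := pZ_le1 a; have := pZ_ge0 b; have := pZ_le1 b.
rewrite /agree_weight; nra.
Qed.

Lemma measurable_agree a b : measurable (agree a b).
Proof.
have -> : agree a b =
    (Zevent a true `&` Zevent b true) `|` (Zevent a false `&` Zevent b false).
  apply/seteqP; split => t; rewrite /agree /Zevent /preimage /=.
  - by case: (Z (X a t)) => <-; [left|right].
  - by case=> -[-> ->].
by apply: measurableU; apply: measurableI; apply: measurable_preimage.
Qed.

Lemma measurable_all_agree ps : measurable (all_agree ps).
Proof. by apply: bigsetI_measurable => p _; exact: measurable_agree. Qed.

Definition pin2 (a b : I) (c : bool) (A : I -> set nat) (i : I) : set nat :=
  if (i == a) || (i == b) then [set k | Z k = c] else A i.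

Lemma pin2_notin a b c A (s : seq I) : a \notin s -> b \notin s ->
  {in s, forall i, X i @^-1` pin2 a b c A i = X i @^-1` A i}.
Proof.
move=> a_s b_s i si; rewrite /pin2; case: ifP => // /orP[] /eqP ei; subst i.
- by rewrite si in a_s.
- by rewrite si in b_s.
Qed.

Lemma pin2l a b c A : X a @^-1` pin2 a b c A a = Zevent a c.
Proof. by rewrite /pin2 eqxx. Qed.

Lemma pin2r a b c A : X b @^-1` pin2 a b c A b = Zevent b c.
Proof. by rewrite /pin2 eqxx orbT. Qed.

Lemma all_agree_cons_cylinder a b ps (s : seq I) A : a \notin s -> b \notin s ->
  all_agree ((a, b) :: ps) `&` cylinder s A =
  (all_agree ps `&` cylinder [:: a, b & s] (pin2 a b true A)) `|`
  (all_agree ps `&` cylinder [:: a, b & s] (pin2 a b false A)).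
Proof.
move=> a_s b_s; rewrite /cylinder !big_cons !pin2l !pin2r.
rewrite !(eq_big_seq _ (pin2_notin _ _ a_s b_s)) /all_agree big_cons.
rewrite /Zevent /preimage; apply/seteqP; split => t /=.
- move=> [[abt pst] St]; rewrite -abt.
  by case: (Z (X a t)); [left|right].
- by case=> -[pst [at_ [bt St]]]; rewrite /agree /= at_ bt.
Qed.

Lemma fine_prob_all_agree_cylinder ps s (A : I -> set nat) :
  uniq (unzip1 ps ++ unzip2 ps ++ s) ->
  fine (P (all_agree ps `&` cylinder s A)) =
  \prod_(p <- ps) agree_weight p.1 p.2 * \prod_(i <- s) fine (P (X i @^-1` A i)).
Proof.
elim: ps s A => [|[a b] ps IHps] s A /= ups.
  by rewrite /all_agree !big_nil setTI mul1r fine_prob_cylinder.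
have ups' : uniq (unzip1 ps ++ unzip2 ps ++ a :: b :: s).
  rewrite -(perm_uniq (_ : perm_eq (a :: unzip1 ps ++ b :: unzip2 ps ++ s) _)) //.
  by apply/permP => q; rewrite !count_cat /= !count_cat /= !count_cat; lia.
have [a_s b_s] : a \notin s /\ b \notin s.
  by move: ups'; rewrite !cat_uniq /= inE => /and5P[_ _ _ _ /and3P[/norP[]]].
pose E c := all_agree ps `&` cylinder [:: a, b & s] (pin2 a b c A).
have disjE : E true `&` E false = set0.
  rewrite /E /cylinder !big_cons !pin2l !pin2r /Zevent /preimage.
  by apply/seteqP; split => t //= [[_ [-> _]] [_ []]].
have mE c : measurable (E c).
  exact: measurableI (measurable_all_agree ps) (measurable_cylinder _ _).
rewrite all_agree_cons_cylinder // -/(E true) -/(E false) measureU //.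
rewrite fineD ?fin_num_measure // !IHps // !big_cons !pin2l !pin2r.
rewrite !(eq_big_seq _ (fun i si => congr1 (fine \o P) (pin2_notin _ _ a_s b_s si))) /=.
rewrite !fine_prob_Zevent_false -/(pZ a) -/(pZ b) /agree_weight; ring.
Qed.

Lemma prob_all_agree_le ps (gam : R) :
  uniq (unzip1 ps ++ unzip2 ps) ->
  (forall p, p \in ps -> agree_weight p.1 p.2 <= gam) ->
  (P (all_agree ps) <= (gam ^+ size ps)%:E)%E.
Proof.
move=> ups w_le.
have := @fine_prob_all_agree_cylinder ps [::] (fun=> setT).
rewrite cats0 /cylinder !big_nil setIT mulr1 => /(_ ups) Pps.
rewrite -(fineK (fin_num_measure P _ (@measurable_all_agree ps))) lee_fin Pps.
rewrite -iter_mulr_1 -(count_predT ps) -big_const_seq big_seq [leRHS]big_seq.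
by apply: ler_prod => p pps; rewrite agree_weight_ge0 w_le.
Qed.

End agreement.

Lemma bernoulli_agree_le (R : realFieldType) (del x y : R) : 0 <= del ->
  del <= x <= 1 - del -> del <= y <= 1 - del ->
  x * y + (1 - x) * (1 - y) <= 1 - del.
Proof. by move=> ? /andP[? ?] /andP[? ?]; nra. Qed.

Lemma odd_divnDn a x : (0 < a)%N -> odd ((x + a) %/ a) = ~~ odd (x %/ a).
Proof. by move=> a_gt0; rewrite divnDr ?dvdnn // divnn a_gt0 addn1. Qed.

Section window_pairs.
Variables (d s : nat).

Definition offset_pt (u : Zd d) (j : {ffun 'I_d -> 'I_s}) : Zd d :=
  zshift u [ffun i => (j i : nat)%:Z].

Lemma offset_pt_inj u : injective (offset_pt u).
Proof.
move=> j j' /ffunP E; apply/ffunP => i; apply: ord_inj.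
by have := E i; rewrite !ffunE => /addrI [].
Qed.

Definition parity_offsets (a : nat) (i0 : 'I_d) : {set {ffun 'I_d -> 'I_s}} :=
  [set j : {ffun 'I_d -> 'I_s} | ~~ odd (j i0 %/ a)].

Lemma offset_pt_neq (u v : Zd d) (i0 : 'I_d) (j j' : {ffun 'I_d -> 'I_s}) :
  u i0 != v i0 -> j \in parity_offsets `|u i0 - v i0| i0 ->
  j' \in parity_offsets `|u i0 - v i0| i0 -> offset_pt u j != offset_pt v j'.
Proof.
move=> uv; rewrite !inE => ej ej'; apply/eqP => /ffunP /(_ i0).
rewrite /offset_pt /zshift !ffunE => E; set a := `|u i0 - v i0|%N in ej ej'.
have a_gt0 : (0 < a)%N by rewrite absz_gt0 subr_eq0.
have [] : (j i0 : nat) = (j' i0 + a)%N \/ (j' i0 : nat) = (j i0 + a)%N by rewrite /a; lia.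
- by move: ej => /[swap] ->; rewrite odd_divnDn // negbK (negbTE ej').
- by move: ej' => /[swap] ->; rewrite odd_divnDn // negbK (negbTE ej).
Qed.

Lemma card_parity_offsets a i0 : (0 < a)%N ->
  (s ^ d <= 2 * #|parity_offsets a i0|)%N.
Proof.
move=> a_gt0; set J := parity_offsets a i0.
pose shiftdown (j : {ffun 'I_d -> 'I_s}) : {ffun 'I_d -> 'I_s} :=
  [ffun i => if i == i0 then Ordinal (leq_ltn_trans (leq_subr a (j i)) (ltn_ord (j i)))
             else j i].
have a_le j : j \in ~: J -> (a <= j i0)%N.
  by rewrite !inE negbK; case: (ltnP (j i0) a) => // lt_ja; rewrite divn_small.
have inj_shiftdown : {in ~: J &, injective shiftdown}.
  move=> j j' jJ j'J /ffunP E; apply/ffunP => i; have := E i; rewrite !ffunE.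
  case: eqP => [->|//] /(congr1 val) /= e; apply: ord_inj.
  by rewrite -(subnK (a_le _ jJ)) -(subnK (a_le _ j'J)) e.
have sub_J : (shiftdown @: ~: J) \subset J.
  apply/fintype.subsetP => _ /imsetP[j jJ ->]; rewrite !inE ffunE eqxx /=.
  have /subnK ja := a_le _ jJ; move: jJ; rewrite !inE negbK.
  by rewrite -{1}ja odd_divnDn.
have := subset_leq_card sub_J; rewrite card_in_imset // => le_card.
have := cardsC J; rewrite card_ffun !card_ord => <-.
by rewrite mul2n -addnn leq_add2l.
Qed.

Definition window_pairs (u v : Zd d) : seq (Zd d * Zd d) :=
  if [pick i | u i != v i] is Some i0 then
    [seq (offset_pt u j, offset_pt v j) | j <- enum (parity_offsets `|u i0 - v i0| i0)]
  else [::].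

Lemma window_pairs_uniq u v :
  uniq (unzip1 (window_pairs u v) ++ unzip2 (window_pairs u v)).
Proof.
rewrite /window_pairs; case: pickP => [i0 uv|_ //].
rewrite /unzip1 /unzip2 -!map_comp cat_uniq.
rewrite !map_inj_uniq ?enum_uniq //=; try exact: offset_pt_inj.
rewrite andbT; apply/hasPn => _ /mapP[j' j'J ->]; apply/mapP => -[j jJ /= e].
by move: jJ j'J; rewrite !mem_enum => /offset_pt_neq/[apply]/(_ uv); rewrite e eqxx.
Qed.

Lemma size_window_pairs u v : u != v -> (s ^ d <= 2 * size (window_pairs u v))%N.
Proof.
move=> /eqP uv; rewrite /window_pairs; case: pickP => [i0 ui0|noi].
  by rewrite size_map -cardE card_parity_offsets // absz_gt0 subr_eq0.
by case: uv; apply/ffunP => i; apply/eqP/negbFE/noi.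
Qed.

Lemma mem_window_pairs u v p :
  p \in window_pairs u v -> exists j, p = (offset_pt u j, offset_pt v j).
Proof. by rewrite /window_pairs; case: pickP => [i0 _|_ //] /mapP[j _ ->]; exists j. Qed.

Lemma same_window_pairs (k : Zd d -> nat) u v :
  same_window k u v s -> forall p, p \in window_pairs u v -> k p.1 = k p.2.
Proof.
move=> sw p /mem_window_pairs[j ->] /=.
by apply: sw => i; rewrite ffunE; case: (j i) => x /= x_lt; lia.
Qed.

End window_pairs.

Section box_points.
Variables (d L : nat).

Definition box_pt (b : {ffun 'I_d -> 'I_L}) : Zd d := [ffun i => (b i : nat)%:Z + 1].

Lemma box_pt_inj : injective box_pt.
Proof.
move=> b b' /ffunP E; apply/ffunP => i; apply: ord_inj.
by have := E i; rewrite !ffunE => /addIr [].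
Qed.

Lemma box_ptP u : box (one_vec d) L u -> exists b, u = box_pt b.
Proof.
move=> u_box; have lt_L i : (`|u i - 1|%N < L)%N.
  by have := u_box i; rewrite /one_vec ffunE; lia.
exists [ffun i => Ordinal (lt_L i)]; apply/ffunP => i; rewrite !ffunE /=.
by have := u_box i; rewrite /one_vec ffunE; lia.
Qed.

Lemma offset_box_pt_le s b (j : {ffun 'I_d -> 'I_s}) i : (s <= L)%N ->
  (`|offset_pt (box_pt b) j i| <= 2 * L)%N.
Proof.
move=> sL; rewrite /offset_pt /zshift /box_pt !ffunE.
by case: (b i) => x xL; case: (j i) => y ys /=; lia.
Qed.

End box_points.

Lemma Zd_norm_le (R : realType) d (n : Zd d) (m : nat) :
  (forall i, `|n i| <= m)%N -> Zd_norm R n <= (d * m)%:R.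
Proof.
move=> n_le; rewrite /Zd_norm -(ger0_norm (ler0n R (d * m))) -sqrtr_sqr.
apply: ler_wsqrtr.
apply: (@le_trans _ _ (\sum_(i < d) (m%:R : R) ^+ 2)).
  apply: ler_sum => i _.
  by rewrite -real_normK ?num_real // -intr_norm -natr_absz lerXn2r ?nnegrE ?ler0n // ler_nat.
rewrite sumr_const card_ord -!natrX -mulrnA ler_nat expnMn mulnC leq_mul2r.
by case: d {n n_le} => [|d]; rewrite ?orbT // -mulnn leq_pmulr ?orbT.
Qed.

Lemma site_pmf0_bounded (R : realType) st (qlo qhi : R) :
  0 < qlo -> qlo <= qhi -> (st = Boson -> qhi < 1) ->
  exists2 del : R, 0 < del < 1 &
    forall q, qlo <= q <= qhi -> del <= site_pmf st q 0 <= 1 - del.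
Proof.
move=> qlo_gt0 qlo_le_qhi; case: st => [/(_ erefl) qhi_lt1|_].
  have m_a : Num.min (1 - qhi) qlo <= 1 - qhi by rewrite ge_min lexx.
  have m_qlo : Num.min (1 - qhi) qlo <= qlo by rewrite ge_min lexx orbT.
  exists (Num.min (1 - qhi) qlo).
    by apply/andP; split; [rewrite lt_min qlo_gt0 subr_gt0 qhi_lt1|lra].
  by move=> q /andP[? ?]; rewrite /site_pmf expr0 mulr1; apply/andP; split; lra.
set a := 1 / (1 + qhi); set b := qlo / (1 + qlo).
have m_a : Num.min a b <= a by rewrite ge_min lexx.
have m_b : Num.min a b <= b by rewrite ge_min lexx orbT.
have b_lt1 : b < 1 by rewrite /b ltr_pdivrMr; lra.
exists (Num.min a b).
  by apply/andP; split; [rewrite lt_min !divr_gt0 //; lra|lra].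
move=> q /andP[qlo_q q_qhi]; rewrite /site_pmf /=.
have a_le : a <= 1 / (1 + q) by rewrite /a !div1r lef_pV2 ?posrE; lra.
have b_le : b <= q / (1 + q).
  rewrite /b ler_pdivrMr; last lra.
  by rewrite mulrAC ler_pdivlMr; [nra|lra].
have e : 1 - 1 / (1 + q) = q / (1 + q) by field; lra.
by apply/andP; split; lra.
Qed.

Lemma site_pmf0_qL_bounded (R : realType) st d (beta mu M : R) (theta : R -> R) :
  0 < beta -> 0 <= M -> {within `[0, +oo[%classic, continuous theta} ->
  (forall x, 0 <= x -> 0 <= theta x) -> (st = Boson -> 0 < mu) ->
  exists2 del : R, 0 < del < 1 & forall L (n : Zd d), Zd_norm R n / L%:R <= M ->
    del <= site_pmf st (qL beta mu theta L n) 0 <= 1 - del.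
Proof.
move=> beta_gt0 M_ge0 theta_cont theta_ge0 mu_gt0.
have theta_contM : {within `[0, M], continuous theta}.
  by apply: continuous_subspaceW theta_cont => x /=; rewrite !in_itv /= => /andP[-> _].
have [x0 x0M theta_le] := EVT_max M_ge0 theta_contM.
have theta0_ge0 : 0 <= theta x0 by apply: theta_ge0; move: x0M; rewrite in_itv => /andP[].
have qlo_gt0 : 0 < expR (- (beta * (theta x0 + mu))) by exact: expR_gt0.
have qlo_le : expR (- (beta * (theta x0 + mu))) <= expR (- (beta * mu)).
  by rewrite ler_expR lerN2 ler_pM2l //; lra.
have qhi_lt1 : st = Boson -> expR (- (beta * mu)) < 1.
  by move=> /mu_gt0 ?; rewrite expR_lt1 oppr_lt0 mulr_gt0.
have [del del01 del_bound] := site_pmf0_bounded qlo_gt0 qlo_le qhi_lt1.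
exists del => // L n nM; apply: del_bound; rewrite /qL.
set x := Zd_norm R n / L%:R in nM *.
have x_ge0 : 0 <= x by rewrite divr_ge0 ?sqrtr_ge0 ?ler0n.
have := theta_le x; rewrite in_itv /= x_ge0 nM => /(_ isT) ?.
have := theta_ge0 x x_ge0 => ?.
by apply/andP; split; rewrite ler_expR lerN2 ler_pM2l //; lra.
Qed.

Lemma expr_le_inv_expr (R : realType) (gam x : R) (m k : nat) : 0 < gam -> 0 < x ->
  k%:R * ln x <= m%:R * - ln gam -> gam ^+ m <= (x ^+ k)^-1.
Proof.
move=> gam_gt0 x_gt0 le_ln.
rewrite -(lnK gam_gt0) -expRM_natl -[X in X ^+ _](lnK x_gt0) -expRM_natl -expRN.
by rewrite ler_expR; lra.
Qed.

Lemma powR_invn_expr (R : realType) (x : R) (n : nat) : (0 < n)%N -> 0 <= x ->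
  (x `^ n%:R^-1) ^+ n = x.
Proof.
move=> n_gt0 x_ge0; rewrite -powR_mulrn ?powR_ge0 // -powRrM mulVf ?powRr1 //.
by rewrite pnatr_eq0 -lt0n.
Qed.

Lemma ln_le_half_add (R : realType) (c x : R) : 0 < c -> 0 < x ->
  c * ln x <= x / 2 + c * ln (2 * c).
Proof.
move=> c_gt0 x_gt0.
have -> : ln x = ln (x / (2 * c)) + ln (2 * c).
  by rewrite -lnM ?posrE ?divr_gt0 ?mulr_gt0 //; congr ln; field; lra.
have := ln_sublinear (divr_gt0 x_gt0 (mulr_gt0 (ltr0Sn R 1) c_gt0)).
have -> : x / 2 = c * (x / (2 * c)) by field; lra.
by move=> ?; nra.
Qed.

Lemma powR_invn_bounds (R : realType) (x : R) (n : nat) : (0 < n)%N -> 1 <= x ->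
  1 <= x `^ n%:R^-1 <= x.
Proof.
move=> n_gt0 x_ge1; have xn := powR_invn_expr n_gt0 (le_trans ler01 x_ge1).
have y_ge1 : 1 <= x `^ n%:R^-1 by rewrite -(expr_ge1 n_gt0 (powR_ge0 _ _)) xn.
by rewrite y_ge1 -[leRHS]xn ler_eXnr.
Qed.

Section scale.
Variables (R : realType) (d : nat) (lam : R).
Hypotheses (d_gt0 : (0 < d)%N) (lam_gt0 : 0 < lam).

(* With [lam = - ln (1 - del)], the factor [4 d + 4] turns [c ln L <= s ^ d]
   into [(1 - del) ^+ (s ^ d / 2) <= L ^- (2 d + 2)]. *)
Definition scale_const : R := Num.max 1 ((4 * d%:R + 4) / lam).

Definition scale (L : nat) : nat :=
  (Num.truncn (scale_const * ln (L%:R : R) `^ d%:R^-1)).+1.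

Lemma scale_const_ge1 : 1 <= scale_const.
Proof. by rewrite le_max lexx. Qed.

Lemma scale_const_lam : 4 * d%:R + 4 <= scale_const * lam.
Proof. by rewrite -ler_pdivrMr // le_max lexx orbT. Qed.

Lemma scale_bounds L : 1 <= ln (L%:R : R) ->
  [/\ scale_const * ln L%:R <= (scale L)%:R ^+ d,
      (scale L)%:R <= scale_const * ln L%:R + 1 &
      (scale L)%:R <= (scale_const + 1) * ln L%:R `^ d%:R^-1].
Proof.
move=> lnL_ge1; have c_ge1 := scale_const_ge1.
set c := scale_const in c_ge1 *; set y := ln (L%:R : R) `^ d%:R^-1.
have /andP[y_ge1 y_le] : 1 <= y <= ln L%:R by exact: powR_invn_bounds.
have yd : y ^+ d = ln L%:R by rewrite powR_invn_expr //; lra.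
have cy_ge0 : 0 <= c * y by rewrite mulr_ge0 //; lra.
have s_gt : c * y < (scale L)%:R := truncnS_gt _.
have s_le : (scale L)%:R <= c * y + 1.
  by rewrite /scale -/c -/y -addn1 natrD lerD2r truncn_le.
have cy_le : c * y <= c * ln L%:R by rewrite ler_wpM2l //; lra.
split; [|lra|lra].
rewrite -yd; apply: (@le_trans _ _ ((c * y) ^+ d)).
  by rewrite exprMn ler_wpM2r ?exprn_ge0 ?ler_eXnr //; lra.
by rewrite lerXn2r ?nnegrE ?ler0n // ltW.
Qed.

Lemma scale_pow_large L m : 1 <= ln (L%:R : R) -> (scale L ^ d <= 2 * m)%N ->
  (2 * d + 2)%:R * ln (L%:R : R) <= m%:R * lam.
Proof.
move=> lnL_ge1; rewrite -(ler_nat R) natrX natrM => sm.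
have [c_lnL _ _] := scale_bounds lnL_ge1.
have h1 : (4 * d%:R + 4) * ln L%:R <= scale_const * lam * ln L%:R.
  by apply: ler_wpM2r; [lra|exact: scale_const_lam].
have h2 : lam * (scale_const * ln L%:R) <= lam * (2 * m%:R).
  by apply: ler_wpM2l; [exact: ltW|lra].
by rewrite natrD natrM; nra.
Qed.

Lemma scale_eventually : exists L0, forall L, (L0 <= L)%N ->
  [/\ (0 < L)%N, 1 <= ln (L%:R : R), (scale L <= L)%N,
      forall m, (scale L ^ d <= 2 * m)%N ->
        (2 * d + 2)%:R * ln (L%:R : R) <= m%:R * lam &
      (scale L)%:R <= (scale_const + 1) * ln (L%:R : R) `^ d%:R^-1].
Proof.
have c_ge1 := scale_const_ge1; set c := scale_const in c_ge1 *.
have ln2c_ge0 : 0 <= c * ln (2 * c) by rewrite mulr_ge0 ?ln_ge0 //; lra.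
have e_gt0 := expR_gt0 (1 : R).
exists (Num.truncn (2 * (c * ln (2 * c) + 1) + expR 1)).+1 => L L_large.
have {}L_large : 2 * (c * ln (2 * c) + 1) + expR 1 < L%:R.
  by apply: lt_le_trans (truncnS_gt _) _; rewrite ler_nat.
have L_gt0 : 0 < (L%:R : R) by lra.
have lnL_ge1 : 1 <= ln (L%:R : R).
  by rewrite -[X in X <= _](expRK 1) ler_ln ?posrE //; lra.
have [_ s_le s_root] := scale_bounds lnL_ge1; rewrite -/c in s_le s_root *.
split => //; first by rewrite -(ltr0n R).
- have := ln_le_half_add (lt_le_trans ltr01 c_ge1) L_gt0.
  by rewrite -(ler_nat R); lra.
- by move=> m; apply: scale_pow_large.
Qed.

End scale.


Lemma measure_bigsetU_le (dT : measure_display) (T : measurableType dT)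
    (R : realType) (mu : {measure set T -> \bar R}) (I : Type) (r : seq I)
    (Pr : pred I) (F : I -> set T) :
  (forall i, measurable (F i)) ->
  (mu (\big[setU/set0]_(i <- r | Pr i) F i) <= \sum_(i <- r | Pr i) mu (F i))%E.
Proof.
move=> mF; apply: proj2 (big_ind2 (fun A x => measurable A /\ (mu A <= x)%E) _ _ _).
- by rewrite measure0.
- move=> A x B y [mA muA] [mB muB]; split; first exact: measurableU.
  by apply: le_trans (measureU2 _ mA mB) _; exact: leeD.
- by move=> i _; split.
Qed.

Lemma ae_eventually_not (dT : measure_display) (T : measurableType dT)
    (R : realType) (mu : {measure set T -> \bar R}) (F : (set T)^nat) :
  (forall n, measurable (F n)) -> (\sum_(n <oo) mu (F n) < +oo)%E ->
  {ae mu, forall t, \forall n \near \oo, ~ F n t}.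
Proof.
move=> mF sumF; exists (lim_sup_set F); split.
- by apply: bigcapT_measurable => k; apply: bigcup_measurable => j _.
- exact: lim_sup_set_cvg0.
- move=> t /= not_ev n _; apply: contrapT => nFt; apply: not_ev.
  by exists n => // j /= nj Fj; apply: nFt; exists j.
Qed.

(* At [n = 0] the bound is [0^-1 = 0]. *)
Lemma nneseries_inv_sqr_lty (R : realType) (u : (\bar R)^nat) :
  (forall n, 0 <= u n <= ((n%:R ^+ 2)^-1)%:E)%E -> (\sum_(n <oo) u n < +oo)%E.
Proof.
move=> u_bd; apply: (@le_lt_trans _ _ 6%:E); last exact: ltry.
apply: lime_le; first by apply: is_cvg_nneseries => n _ _; case/andP: (u_bd n).
apply: nearW => N.
pose f (k : nat) : R := - 6 * (k.+1%:R)^-1.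
apply: (@le_trans _ _ (\sum_(0 <= n < N) (f n.+1 - f n)%:E)%E).
  apply: lee_sum => n _; case/andP: (u_bd n) => _ /le_trans; apply.
  rewrite lee_fin.
  have -> : f n.+1 - f n = 6 / (n.+1%:R * n.+2%:R).
    by rewrite /f; field; rewrite !lt0r_neq0 //; have := ler0n R n; lra.
  case: n => [|n]; first by rewrite expr0n invr0; lra.
  rewrite ler_pdivlMr ?mulr_gt0 ?ltr0n // mulrC ler_pdivrMr ?exprn_gt0 ?ltr0n //.
  by rewrite -natrX -!natrM ler_nat; nia.
rewrite sumEFin lee_fin telescope_sumr // /f invr1 mulr1 mulNr opprK.
by rewrite gerDr oppr_le0 divr_ge0.
Qed.

Lemma limn_esup_le_eventually (R : realType) (u : (\bar R)^nat) (c : \bar R) :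
  (\forall n \near \oo, u n <= c)%E -> (limn_esup u <= c)%E.
Proof.
move=> uc; apply: le_trans (ereal_inf_lbound _) _; first by exists [set n | (u n <= c)%E].
by apply: ge_ereal_sup => _ [n un <-].
Qed.

Section collisions.
Context {R : realType} {dT : measure_display} {T : measurableType dT}
  (P : probability T R) {d : nat} (X : Zd d -> T -> nat) (L s : nat) (del : R).

Definition collision_event : set T :=
  \big[setU/set0]_(bb : {ffun 'I_d -> 'I_L} * {ffun 'I_d -> 'I_L} | bb.1 != bb.2)
    all_agree X (pred1 0%N) (window_pairs s (box_pt bb.1) (box_pt bb.2)).

Lemma no_collision_event t : ~ collision_event t ->
  forall u v, box (one_vec d) L u -> box (one_vec d) L v -> u <> v ->
  ~ same_window (X ^~ t) u v s.
Proof.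
move=> no_coll u v /box_ptP[b1 ->] /box_ptP[b2 ->] b12 sw; apply: no_coll.
rewrite /collision_event (bigD1 (b1, b2)) /=; last by apply/eqP => e; apply: b12; rewrite e.
left; rewrite /all_agree -bigcap_seq => p /= /(same_window_pairs sw) eq_p.
by rewrite /agree /= eq_p.
Qed.

Hypothesis mX : forall n, measurable_fun setT (X n).

Lemma measurable_collision_event : measurable collision_event.
Proof. by apply: bigsetU_measurable => bb _; exact: measurable_all_agree. Qed.

Hypothesis indX : mutually_independent P X.
Hypotheses (L_gt0 : (0 < L)%N) (s_le_L : (s <= L)%N).
Hypothesis del_ge0 : 0 <= del.
Hypothesis X0_bounded : forall n : Zd d, (forall i, `|n i| <= 2 * L)%N ->
  del <= fine (P (X n @^-1` [set 0%N])) <= 1 - del.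
Hypothesis window_large : forall m, (s ^ d <= 2 * m)%N ->
  (1 - del) ^+ m <= (L%:R ^+ (2 * d + 2))^-1.

Lemma prob_window_agree_le (b1 b2 : {ffun 'I_d -> 'I_L}) : b1 != b2 ->
  (P (all_agree X (pred1 0%N) (window_pairs s (box_pt b1) (box_pt b2)))
    <= ((L%:R ^+ (2 * d + 2))^-1)%:E)%E.
Proof.
move=> b12.
have pZ0_bounded (b : {ffun 'I_d -> 'I_L}) (j : {ffun 'I_d -> 'I_s}) :
    del <= pZ P X (pred1 0%N) (offset_pt (box_pt b) j) <= 1 - del.
  have -> : pZ P X (pred1 0%N) (offset_pt (box_pt b) j) =
      fine (P (X (offset_pt (box_pt b) j) @^-1` [set 0%N])).
    by congr (fine (P _)); rewrite /Zevent; apply/seteqP; split => t /= => [/eqP|->].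
  by apply: X0_bounded => i; apply: offset_box_pt_le.
apply: le_trans (prob_all_agree_le (gam := 1 - del) mX indX _ _) _.
- exact: window_pairs_uniq.
- move=> p /mem_window_pairs[j ->]; rewrite /agree_weight /=.
  by apply: bernoulli_agree_le; rewrite ?pZ0_bounded.
- rewrite lee_fin; apply: window_large; apply: size_window_pairs.
  by apply: contra_neq b12 => /box_pt_inj ->.
Qed.

Lemma prob_collision_event_le : (P collision_event <= ((L%:R ^+ 2)^-1)%:E)%E.
Proof.
set bound : R := (L%:R ^+ (2 * d + 2))^-1.
apply: le_trans (measure_bigsetU_le P _ _ (fun bb => measurable_all_agree _ mX _)) _.
apply: le_trans; first by apply: lee_sum => bb; exact: prob_window_agree_le.
rewrite /= sumEFin lee_fin big_mkcond /=.
apply: (@le_trans _ _ (\sum_(bb : {ffun 'I_d -> 'I_L} * {ffun 'I_d -> 'I_L}) bound)).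
  by apply: ler_sum => bb _; case: ifP; rewrite ?invr_ge0 ?exprn_ge0.
rewrite sumr_const card_prod card_ffun !card_ord -(mulr_natl bound) /bound natrM !natrX.
have L_neq0 : (L%:R : R) != 0 by rewrite pnatr_eq0 -lt0n.
have -> : (L%:R ^+ (2 * d + 2) : R) = L%:R ^+ d * L%:R ^+ d * L%:R ^+ 2.
  by rewrite -!exprD; congr (_ ^+ _); lia.
rewrite le_eqVlt; apply/orP; left; apply/eqP.
by field; rewrite L_neq0 expf_neq0.
Qed.

End collisions.

Lemma RL_ratio_le (R : realType) d (L s : nat) (k : Zd d -> nat) (c : R) :
  (0 < s)%N -> 0 < ln (L%:R : R) ->
  (forall u v, box (one_vec d) L u -> box (one_vec d) L v -> u <> v ->
     ~ same_window k u v s) ->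
  s%:R <= c * ln (L%:R : R) `^ d%:R^-1 -> (RL_ratio R L k <= c%:E)%E.
Proof.
move=> s_gt0 lnL_gt0 no_coll s_le.
have y_gt0 : 0 < ln (L%:R : R) `^ d%:R^-1 by rewrite powR_gt0.
have sup_le : (ereal_sup [set RL R L u k | u in box (one_vec d) L] <= (s%:R)%:E)%E.
  apply: ge_ereal_sup => _ [u ub <-]; apply: ereal_inf_lbound.
  exists s => //; split => // v vb vu; apply: no_coll => // uv.
  by apply: vu; rewrite uv.
rewrite /RL_ratio; apply: le_trans (lee_wpmul2r _ sup_le) _.
  by rewrite lee_fin invr_ge0 ltW.
by rewrite -EFinM lee_fin ler_pdivrMr.
Qed.

Lemma prob_collision_event_qL_le (R : realType) st d (beta mu del : R)
    (theta : R -> R) (dT : measure_display) (T : measurableType dT)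
    (P : probability T R) (K : nat -> Zd d -> T -> nat) (L s : nat) :
  (forall L n, measurable_fun setT (K L n)) ->
  mutually_independent P (fun i : nat * Zd d => K i.1 i.2) ->
  (forall L n k, (0 < L)%N ->
     P (K L n @^-1` [set k]) = (site_pmf st (qL beta mu theta L n) k)%:E) ->
  0 < del < 1 ->
  (forall L (n : Zd d), Zd_norm R n / L%:R <= 2 * d%:R ->
     del <= site_pmf st (qL beta mu theta L n) 0 <= 1 - del) ->
  (0 < L)%N -> (s <= L)%N ->
  (forall m, (s ^ d <= 2 * m)%N ->
     (2 * d + 2)%:R * ln (L%:R : R) <= m%:R * - ln (1 - del)) ->
  (P (collision_event (K L) L s) <= ((L%:R ^+ 2)^-1)%:E)%E.
Proof.
move=> mK indK lawK /andP[del_gt0 del_lt1] pmf0_bounded L_gt0 sL s_large.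
apply: (prob_collision_event_le (del := del)) => //.
- have pairL_inj : injective (@pair nat (Zd d) L) by move=> x y [].
  exact: (mutually_independent_inj pairL_inj indK).
- exact: ltW.
- move=> n n_le; rewrite lawK //=; apply: pmf0_bounded.
  rewrite ler_pdivrMr ?ltr0n //; apply: le_trans (Zd_norm_le _ n_le) _.
  by rewrite !natrM mulrA (mulrC d%:R).
- move=> m /s_large le_m; apply: expr_le_inv_expr; rewrite ?ltr0n //; lra.
Qed.

Theorem lemma3 (R : realType) (st : stat) (d : nat) (beta mu : R)
  (theta : R -> R) :
  (0 < d)%N -> 0 < beta ->
  {within `[0, +oo[%classic, continuous theta} ->
  (forall x, 0 <= x -> 0 <= theta x) ->
  (forall x, 0 < x -> 0 < theta x) ->
  (st = Boson -> 0 < mu) ->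
  (h_pm st d beta mu theta < +oo)%E ->
  exists c : R,
  forall (dT : measure_display) (T : measurableType dT)
    (P : probability T R) (K : nat -> Zd d -> T -> nat),
  (forall L n, measurable_fun setT (K L n)) ->
  mutually_independent P (fun i : nat * Zd d => K i.1 i.2) ->
  (forall L n k, (0 < L)%N ->
     P (K L n @^-1` [set k]) = (site_pmf st (qL beta mu theta L n) k)%:E) ->
  {ae P, forall t,
     (limn_esup (fun L => @RL_ratio R d L (fun n => K L n t)) <= c%:E)%E}.
Proof.
move=> d_gt0 beta_gt0 theta_cont theta_ge0 _ mu_gt0 _.
have [del del01 pmf0_bounded] := site_pmf0_qL_bounded d
  beta_gt0 (mulr_ge0 (ler0n R 2) (ler0n R d)) theta_cont theta_ge0 mu_gt0.
set lam := - ln (1 - del).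
have lam_gt0 : 0 < lam by case/andP: del01 => ? ?; rewrite oppr_gt0 ln_lt0 //; lra.
have [L0 scale_facts] := scale_eventually d_gt0 lam_gt0.
exists (scale_const d lam + 1) => dT T P K mK indK lawK.
pose bad L := if (L0 <= L)%N then collision_event (K L) L (scale d lam L) else set0.
have mbad L : measurable (bad L).
  by rewrite /bad; case: ifP => _; [exact: measurable_collision_event|exact: measurable0].
have sum_bad : (\sum_(L <oo) P (bad L) < +oo)%E.
  apply: nneseries_inv_sqr_lty => L; rewrite measure_ge0 /bad.
  case: ifP => [L_big|_]; last by rewrite measure0 lee_fin invr_ge0 exprn_ge0.
  have [L_gt0 _ sL scale_pow _] := scale_facts L L_big.
  exact: (prob_collision_event_qL_le mK indK lawK del01 pmf0_bounded L_gt0 sL scale_pow).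
apply: filterS (ae_eventually_not mbad sum_bad) => t t_good.
apply: limn_esup_le_eventually; near=> L.
have L_big : (L0 <= L)%N by near: L; exact: nbhs_infty_ge.
have : ~ bad L t by near: L.
rewrite /bad L_big => no_coll.
have [_ lnL_ge1 _ _ scale_le] := scale_facts L L_big.
apply: RL_ratio_le scale_le => //; first lra.
exact: no_collision_event no_coll.
Unshelve. all: by end_near.
Qed.
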